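(* Let $\Gamma$ be a finitely generated semigroup with identity $e$ and $\rho:\Gamma\to\mathrm{End}(G)$ an endomorphism action with $\rho(e)=\mathrm{Id}$ on a solenoid $G$. Then every $\rho$-basis of $\widehat G$ is $k$-regular for some positive integer $k$.
   Context: A solenoid is a compact connected finite-dimensional metrizable abelian group (dual $\widehat G$ torsion-free of finite rank). $\widehat\rho(\gamma)(\chi)=\chi\circ\rho(\gamma)$. A $\rho$-basis is a set $A\subset\widehat G$ generating $\widehat G$ as an abelian group with $A=\bigcup_{\gamma}\widehat\rho(\gamma)(F)$ for some finite $F\subset\widehat G$. For a discrete abelian group $H$ (written additively), a subset $B\subset H$ and $k>0$, $\mathbf Q_k(B)$ is the set of $h\in H$ satisfying an equation $n_0h=\sum_{j=1}^r n_ja_j$ with $a_1,\dots,a_r\in B$, integers $n_0\ne 0,n_1,\dots,n_r$, and $|n_0|+|n_1|+\cdots+|n_r|\le k$. A set $A\subset H$ is $k$-regular if there is an increasing sequence of finite sets $A_1\subset A_2\subset\cdots\subset A$ with $\bigcup_i A_i=A$ and $A_n\subset\mathbf Q_k(A_{n-1})$ for all $n\ge2$. *)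

From HB Require Import structures.
From mathcomp Require Import all_boot all_order all_algebra.
From mathcomp Require Import all_classical all_reals all_analysis.
From Stdlib Require List.
Set Implicit Arguments. Unset Strict Implicit. Unset Printing Implicit Defensive.
Import Order.TTheory GRing.Theory Num.Theory.
Import numFieldTopology.Exports numFieldNormedType.Exports.
Local Open Scope classical_set_scope.
Local Open Scope ring_scope.

(* Points of the circle are represented as pairs (re, im) in R * R with the
   product topology (= subspace topology of C); the group law is complex
   multiplication. *)
Section Circle.
Variable R : realType.

Definition cmul (z w : R * R) : R * R :=
  (z.1 * w.1 - z.2 * w.2, z.1 * w.2 + z.2 * w.1).
Definition cone : R * R := (1, 0).
Definition cconj (z : R * R) : R * R := (z.1, - z.2).
Definition cpow (z : R * R) (n : int) : R * R :=
  match n with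
  | Posz m => iter m (cmul z) cone
  | Negz m => iter m.+1 (cmul (cconj z)) cone
  end.
End Circle.

Definition metrizable (R : realType) (T : topologicalType) : Prop :=
  exists d : T -> T -> R,
    [/\ forall x y, 0 <= d x y,
        forall x y, d x y = 0 <-> x = y,
        forall x y, d x y = d y x,
        forall x y z, d x z <= d x y + d y z &
        forall (x : T) (U : set T),
          nbhs x U <-> exists2 e : R, 0 < e & [set y | d x y < e] `<=` U].

Section Dual.
Variables (R : realType) (G : topologicalZmodType).

(* continuous characters G -> T ; the dual group \hat G is the set of them,
   with pointwise multiplication (written additively in the paper) *)
Definition is_character (chi : G -> R * R) : Prop :=
  [/\ continuous chi,
      forall x, (chi x).1 ^+ 2 + (chi x).2 ^+ 2 = 1 &
      forall x y, chi (x + y) = cmul (chi x) (chi y)].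

Definition dual : set (G -> R * R) := [set chi | is_character chi].

(* the element  n_1 a_1 + ... + n_r a_r  of \hat G (pointwise, multiplicatively) *)
Definition zlin (s : seq ((G -> R * R) * int)) : G -> R * R :=
  fun x => foldr (fun p acc => cmul (cpow (p.1 x) p.2) acc) (cone R) s.

Definition Qk (k : nat) (B : set (G -> R * R)) : set (G -> R * R) :=
  [set h | exists (n0 : int) (s : seq ((G -> R * R) * int)),
     [/\ n0 != 0,
         List.Forall (fun p => B p.1) s,
         (`|n0|%N + sumn [seq `|p.2|%N | p <- s] <= k)%N &
         forall x, cpow (h x) n0 = zlin s x]].

Definition k_regular (k : nat) (A : set (G -> R * R)) : Prop :=
  exists An : nat -> set (G -> R * R),
    [/\ forall n, finite_set (An n),
        forall n, An n `<=` An n.+1,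
        forall n, An n `<=` A,
        \bigcup_n An n = A &
        forall n, An n.+1 `<=` Qk k (An n)].

Definition generates_dual (A : set (G -> R * R)) : Prop :=
  forall chi, dual chi -> exists s : seq ((G -> R * R) * int),
    List.Forall (fun p => A p.1) s /\ chi = zlin s.

Definition zindep (s : seq (G -> R * R)) : Prop :=
  forall ns : seq int, size ns = size s ->
    zlin (zip s ns) = (fun _ => cone R) -> all (fun n => n == 0) ns.

Definition dual_torsion_free : Prop :=
  forall chi (n : int), dual chi -> n != 0 ->
    (fun x => cpow (chi x) n) = (fun _ => cone R) -> chi = (fun _ => cone R).

Definition dual_finite_rank : Prop :=
  exists N : nat, forall s : seq (G -> R * R),
    List.Forall dual s -> zindep s -> (size s <= N)%N.

(* solenoid: compact connected finite-dimensional metrizable abelian group,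
   i.e. dual torsion-free of finite rank *)
Definition solenoid : Prop :=
  [/\ compact [set: G], connected [set: G], @metrizable R G,
      dual_torsion_free & dual_finite_rank].

Definition endo (f : G -> G) : Prop :=
  continuous f /\ forall x y, f (x + y) = f x + f y.
End Dual.

Inductive gen_by (S : Type) (op : S -> S -> S) (g : seq S) : S -> Prop :=
  | gen_base s : List.In s g -> gen_by op g s
  | gen_op a b : gen_by op g a -> gen_by op g b -> gen_by op g (op a b).

Definition semigroup_with_identity (S : Type) (op : S -> S -> S) (e : S) :=
  (forall a b c, op a (op b c) = op (op a b) c) /\
  (forall a, op e a = a /\ op a e = a).

Definition finitely_generated (S : Type) (op : S -> S -> S) :=
  exists g : seq S, forall s, gen_by op g s.

Definition rho_basis (R : realType) (G : topologicalZmodType) (S : Type)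
  (rho : S -> G -> G) (A : set (G -> R * R)) : Prop :=
  A `<=` @dual R G /\ @generates_dual R G A /\
  exists F : seq (G -> R * R), List.Forall (@dual R G) F /\
    A = [set chi | exists gamma, exists2 f, List.In f F & chi = f \o rho gamma].

From HB Require Import structures.
From mathcomp Require Import all_boot all_order all_algebra.
From mathcomp Require Import all_classical all_reals all_analysis.
From mathcomp Require Import ring zify.
From Stdlib Require Import Classical.
From Stdlib Require List.
Set Implicit Arguments. Unset Strict Implicit. Unset Printing Implicit Defensive.
Import Order.TTheory GRing.Theory Num.Theory.
Local Open Scope classical_set_scope.
Local Open Scope ring_scope.

(* Choose a maximal Z-independent family s inside the rho-basis A; it is finite
   because the dual has finite rank, so every element of A has a nonzero
   multiple in the span of s.  Write A as the increasing union of the finite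
   "balls" B_L = { f o rho(w) : f in F, w a word of length <= L in the
   generators }, and take c with s inside B_c.  The finitely many elements of
   B_(c+1) satisfy relations over s of cost at most some K.  A word of length
   L+1 > c splits as p ++ q with |p| = c+1, and precomposing the relation for
   f o rho(p) with rho(q) expresses f o rho(p ++ q) over B_(c + |q|), a subset
   of B_L, with the same cost.  Hence the balls B_(n+c) witness
   max(2,K)-regularity, 2 being the cost of the trivial relation h = h. *)

Section CircleGroup.
Variable R : realType.
Implicit Types a b c d w z : R * R.

Lemma cmulA a b c : cmul a (cmul b c) = cmul (cmul a b) c.
Proof. case: a b c => [a1 a2] [b1 b2] [c1 c2]; rewrite /cmul /=; congr pair; ring. Qed.

Lemma cmul1z a : cmul (cone R) a = a.
Proof. case: a => [a1 a2]; rewrite /cmul /=; congr pair; ring. Qed.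

Lemma cmulz1 a : cmul a (cone R) = a.
Proof. case: a => [a1 a2]; rewrite /cmul /=; congr pair; ring. Qed.

Lemma cmulACA a b c d : cmul (cmul a b) (cmul c d) = cmul (cmul a c) (cmul b d).
Proof.
case: a b c d => [a1 a2] [b1 b2] [c1 c2] [d1 d2]; rewrite /cmul /=; congr pair; ring.
Qed.

Lemma cmul_iter_inv m w z : cmul w z = cone R ->
  cmul (iter m (cmul w) (cone R)) (iter m (cmul z) (cone R)) = cone R.
Proof.
move=> wz; elim: m => [|m IH] /=; first by rewrite cmulz1.
by rewrite cmulACA wz IH cmulz1.
Qed.

Lemma cmul_conj z : z.1 ^+ 2 + z.2 ^+ 2 = 1 -> cmul z (cconj z) = cone R.
Proof.
case: z => [z1 z2] /= z_unit; rewrite /cmul /cconj /cone /=; congr pair; last by ring.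
by rewrite -z_unit; ring.
Qed.

Lemma cmul_conjl z : z.1 ^+ 2 + z.2 ^+ 2 = 1 -> cmul (cconj z) z = cone R.
Proof.
case: z => [z1 z2] /= z_unit; rewrite /cmul /cconj /cone /=; congr pair; last by ring.
by rewrite -z_unit; ring.
Qed.

Lemma cpowNr z (n : int) : z.1 ^+ 2 + z.2 ^+ 2 = 1 ->
  cmul (cpow z (- n)) (cpow z n) = cone R.
Proof.
move=> z_unit; case: n => [[|m]|m].
- by rewrite oppr0 /= cmulz1.
- by apply: cmul_iter_inv; apply: cmul_conjl.
- by apply: cmul_iter_inv; apply: cmul_conj.
Qed.
End CircleGroup.

Lemma finite_set_In T (l : seq T) : finite_set [set x | List.In x l].
Proof.
elim: l => [|x l IH].
  by have -> : [set x : T | List.In x nil] = set0 by apply/seteqP; split.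
have -> : [set y : T | List.In y (x :: l)] = [set x] `|` [set y | List.In y l].
  by apply/seteqP; split => y /= [->|ly]; [left|right|left|right].
by rewrite finite_setU; split=> //; apply: finite_set1.
Qed.

Lemma list_uniform_bound T (P : nat -> T -> Prop) (l : seq T) :
  (forall n m x, (n <= m)%N -> P n x -> P m x) ->
  (forall x, List.In x l -> exists n, P n x) ->
  exists N, forall x, List.In x l -> P N x.
Proof.
move=> P_mono; elim: l => [|x l IH] lP; first by exists 0%N.
have [n Pnx] := lP x (or_introl erefl).
have [N PN] := IH (fun y ly => lP y (or_intror ly)).
exists (maxn n N) => y [<-|/PN PNy].
- exact: P_mono (leq_maxl n N) Pnx.
- exact: P_mono (leq_maxr n N) PNy.
Qed.

Lemma Forall_zip_In A B (s0 s : seq A) (ns : seq B) :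
  (forall y, List.In y s -> List.In y s0) ->
  List.Forall (fun p => List.In p.1 s0) (zip s ns).
Proof.
elim: s ns => [|x s IH] [|n ns] /= ss0; constructor; first by apply: ss0; left.
by apply: IH => y sy; apply: ss0; right.
Qed.

Section RelationSets.
Variables (R : realType) (G : topologicalZmodType).
Local Notation char := (G -> R * R).
Implicit Types (B : set char) (s : seq char).

Lemma Qk_mono k k' B B' : (k <= k')%N -> B `<=` B' -> Qk k B `<=` Qk k' B'.
Proof.
move=> kk' BB' h [n0 [t [n0_neq0 tB cost ht]]]; exists n0, t; split=> //.
- by apply: List.Forall_impl tB => p /BB'.
- exact: leq_trans kk'.
Qed.

Lemma sub_Qk k B : (2 <= k)%N -> B `<=` Qk k B.
Proof.
move=> k_ge2 h Bh; exists 1, [:: (h, 1)]; split=> //; first by constructor.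
by move=> x; rewrite /zlin /= !cmulz1.
Qed.

Lemma zlin_comp (phi : G -> G) (t : seq (char * int)) x :
  zlin [seq (p.1 \o phi, p.2) | p <- t] x = zlin t (phi x).
Proof. by elim: t => [|p t IH] //=; rewrite /zlin /= -!/(zlin _ _) IH. Qed.

Lemma Qk_comp k B (phi : G -> G) h :
  Qk k B h -> Qk k [set chi \o phi | chi in B] (h \o phi).
Proof.
move=> [n0 [t [n0_neq0 tB cost ht]]].
exists n0, [seq (p.1 \o phi, p.2) | p <- t]; split=> //.
- by elim: tB => [|p t' Bp _ IH] /=; constructor => //; exists p.1.
- by rewrite -map_comp.
- by move=> x; rewrite zlin_comp -ht.
Qed.

Lemma exists_maximal_zindep (A : set char) :
  dual_finite_rank R G -> A `<=` @dual R G ->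
  exists s, [/\ List.Forall A s, zindep s & forall h, A h -> ~ zindep (h :: s)].
Proof.
move=> [N rankN] AD.
suff grow d s : (N - size s <= d)%N -> List.Forall A s -> zindep s ->
    exists s', [/\ List.Forall A s', zindep s' & forall h, A h -> ~ zindep (h :: s')].
  by apply: (grow _ [::]) => //; case.
elim: d s => [|d IH] s dN As s_indep;
  (have [[h [Ah hs_indep]]|maximal] := classic (exists h, A h /\ zindep (h :: s));
   last by exists s; split=> // h Ah hs_indep; apply: maximal; exists h).
- have : (size (h :: s) <= N)%N.
    apply: rankN hs_indep; constructor; first exact: AD.
    exact: List.Forall_impl As.
  by rewrite /=; lia.
- by apply: (IH (h :: s)) => //=; [lia | constructor].
Qed.

(* A vanishing relation n0 h + sum n_j s_j = 0 with n0 <> 0 (forced by the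
   independence of s) gives (-n0) h = sum n_j s_j. *)
Lemma maximal_zindep_Qk s h :
  dual h -> zindep s -> ~ zindep (h :: s) ->
  exists k, Qk k [set chi | List.In chi s] h.
Proof.
move=> [_ h_unit _] s_indep not_indep.
have [ns not_trivial_only] := not_all_ex_not _ _ not_indep.
have [size_ns not_rel_trivial] := imply_to_and _ _ not_trivial_only.
have [rel nontriv] := imply_to_and _ _ not_rel_trivial.
clear not_indep not_trivial_only not_rel_trivial.
case: ns size_ns rel nontriv => [//|n0 ns] /= /eqP.
rewrite eqSS => /eqP size_ns rel nontriv.
have relx x : cmul (cpow (h x) n0) (zlin (zip s ns) x) = cone R :=
  congr1 (fun f => f x) rel.
have n0_neq0 : n0 != 0.
  apply: contra_notN nontriv => /eqP n0_eq0; rewrite /= n0_eq0 /=.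
  apply: s_indep size_ns _; apply/funext => x.
  by rewrite -(relx x) n0_eq0 cmul1z.
exists (`|- n0|%N + sumn [seq `|p.2|%N | p <- zip s ns])%N, (- n0), (zip s ns).
split=> //; [by rewrite oppr_eq0 | exact: Forall_zip_In |].
by move=> x; rewrite -[cpow _ (- n0)]cmulz1 -(relx x) cmulA cpowNr // cmul1z.
Qed.

Lemma k_regular_from_tail k (A : set char) (B : nat -> set char) c :
  (forall n, finite_set (B n)) -> (forall n m, (n <= m)%N -> B n `<=` B m) ->
  \bigcup_n B n = A -> (forall n, (c <= n)%N -> B n.+1 `<=` Qk k (B n)) ->
  k_regular k A.
Proof.
move=> B_fin B_mono <- B_step; exists (fun n => B (n + c)%N); split => //.
- by move=> n; apply: B_mono; rewrite leq_add2r.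
- by move=> n x Bx; exists (n + c)%N.
- apply/seteqP; split=> x [n _ Bx]; first by exists (n + c)%N.
  by exists n => //; apply: B_mono Bx; rewrite leq_addr.
- by move=> n; rewrite addSn; apply: B_step; rewrite leq_addl.
Qed.
End RelationSets.

Section Words.
Variables (S : Type) (op : S -> S -> S) (e : S).
Hypothesis op_monoid : semigroup_with_identity op e.

Definition word_eval (w : seq S) : S := foldr op e w.

Definition word_over (g w : seq S) : Prop := List.Forall (fun x => List.In x g) w.

Lemma word_eval_cat w1 w2 : word_eval (w1 ++ w2) = op (word_eval w1) (word_eval w2).
Proof.
have [opA ope] := op_monoid; elim: w1 => [|x w IH] /=; first by rewrite (proj1 (ope _)).
by rewrite IH opA.
Qed.

Lemma gen_by_word_eval g s :
  gen_by op g s -> exists2 w, word_over g w & s = word_eval w.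
Proof.
elim=> [x gx|a b _ [wa ga ->] _ [wb gb ->]].
  by exists [:: x]; [constructor | rewrite /= (proj2 (proj2 op_monoid x))].
by exists (wa ++ wb); [apply/List.Forall_app | rewrite word_eval_cat].
Qed.

Fixpoint words_upto (g : seq S) (L : nat) : seq (seq S) :=
  if L is L'.+1 then [::] :: List.flat_map (fun x => map (cons x) (words_upto g L')) g
  else [:: [::]].

Lemma In_words_upto g L w :
  List.In w (words_upto g L) <-> word_over g w /\ (size w <= L)%N.
Proof.
elim: L w => [|L IH] w /=.
  split=> [[<-|[]]|[_]]; first by split=> //; constructor.
  by case: w => // _; left.
split=> [[<-|/List.in_flat_map[x [gx /List.in_map_iff[w' [<- /IH[gw' sw']]]]]]|[gw sw]].
- by split=> //; constructor.
- by split=> //; constructor.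
case: w gw sw => [|x w] gw sw; first by left.
move/List.Forall_cons_iff: gw => [gx gw]; right; apply/List.in_flat_map.
by exists x; split=> //; apply/List.in_map; apply/IH.
Qed.
End Words.

Section WordBalls.
Variables (R : realType) (G : topologicalZmodType) (S : Type).
Variables (op : S -> S -> S) (e : S) (rho : S -> G -> G).
Variables (g : seq S) (F : seq (G -> R * R)).
Hypothesis op_monoid : semigroup_with_identity op e.
Hypothesis rho_op : forall a b, rho (op a b) = rho a \o rho b.

Definition word_ball (L : nat) : set (G -> R * R) :=
  [set chi | exists f w, [/\ List.In f F, word_over g w, (size w <= L)%N &
     chi = f \o rho (word_eval op e w)]].

Definition word_ball_seq (L : nat) : seq (G -> R * R) :=
  List.flat_map (fun f => map (fun w => f \o rho (word_eval op e w)) (words_upto g L)) F.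

Lemma word_ballE L : word_ball L = [set chi | List.In chi (word_ball_seq L)].
Proof.
apply/seteqP; split=> chi /=.
  move=> [f [w [Ff gw sw ->]]]; apply/List.in_flat_map; exists f; split=> //.
  by apply/List.in_map_iff; exists w; split=> //; apply/In_words_upto.
move=> /List.in_flat_map[f [Ff /List.in_map_iff[w [<- /In_words_upto[gw sw]]]]].
by exists f, w.
Qed.

Lemma word_ball_finite L : finite_set (word_ball L).
Proof. by rewrite word_ballE; apply: finite_set_In. Qed.

Lemma word_ball_mono L L' : (L <= L')%N -> word_ball L `<=` word_ball L'.
Proof.
by move=> LL' _ [f [w [Ff gw sw ->]]]; exists f, w; split=> //; apply: leq_trans LL'.
Qed.

Lemma rho_word_eval_cat w1 w2 :
  rho (word_eval op e (w1 ++ w2)) = rho (word_eval op e w1) \o rho (word_eval op e w2).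
Proof. by rewrite word_eval_cat // rho_op. Qed.

Lemma word_ball_comp L q : word_over g q ->
  [set chi \o rho (word_eval op e q) | chi in word_ball L] `<=` word_ball (L + size q)%N.
Proof.
move=> gq _ [_ [f [w [Ff gw sw ->]]] <-]; exists f, (w ++ q); split=> //.
- exact/List.Forall_app.
- by rewrite size_cat leq_add2r.
- by rewrite rho_word_eval_cat.
Qed.

Lemma word_ball_step k c : (2 <= k)%N ->
  word_ball c.+1 `<=` Qk k (word_ball c) ->
  forall L, (c <= L)%N -> word_ball L.+1 `<=` Qk k (word_ball L).
Proof.
move=> k_ge2 step_c L cL chi [f [w [Ff gw sw ->]]].
have [short|long] := leqP (size w) L.
  by apply: sub_Qk => //; exists f, w.
have [gp gq] : word_over g (take c.+1 w) /\ word_over g (drop c.+1 w).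
  by move: gw; rewrite -{1}(cat_take_drop c.+1 w) => /List.Forall_app.
have -> : f \o rho (word_eval op e w) =
    (f \o rho (word_eval op e (take c.+1 w))) \o rho (word_eval op e (drop c.+1 w)).
  by rewrite -{1}(cat_take_drop c.+1 w) rho_word_eval_cat.
apply: Qk_mono (Qk_comp _ (step_c _ _)) => //.
- apply: subset_trans (word_ball_comp (L := c) gq) _; apply: word_ball_mono.
  by rewrite size_drop; lia.
- by exists f, (take c.+1 w); split=> //; rewrite size_take; case: ifP; lia.
Qed.

Lemma orbit_eq_bigcup_word_ball : (forall s, gen_by op g s) ->
  [set chi | exists gamma, exists2 f, List.In f F & chi = f \o rho gamma] =
  \bigcup_L word_ball L.
Proof.
move=> gen; apply/seteqP; split=> chi.
  move=> [gamma [f Ff ->]]; have [w gw ->] := gen_by_word_eval op_monoid (gen gamma).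
  by exists (size w) => //; exists f, w.
by move=> [L _ [f [w [Ff _ _ ->]]]]; exists (word_eval op e w), f.
Qed.
End WordBalls.

Theorem proposition4p8 (R : realType) (G : topologicalZmodType)
  (S : Type) (op : S -> S -> S) (e : S) (rho : S -> G -> G) :
  semigroup_with_identity op e ->
  finitely_generated op ->
  solenoid R G ->
  (forall gamma, endo (rho gamma)) ->
  (forall a b, rho (op a b) = rho a \o rho b) ->
  rho e = id ->
  forall A : set (G -> R * R), rho_basis rho A ->
  exists k : nat, (0 < k)%N /\ k_regular k A.
Proof.
move=> op_monoid [g gen] [_ _ _ _ rank] _ rho_op _ A [AD [_ [F [_ A_orbit]]]].
pose B := word_ball op e rho g F.
have A_eq : A = \bigcup_L B L.
  by rewrite A_orbit (orbit_eq_bigcup_word_ball _ _ op_monoid gen).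
have [s [sA s_indep s_max]] := exists_maximal_zindep rank AD.
have [c s_in_Bc] : exists c, forall chi, List.In chi s -> B c chi.
  apply: list_uniform_bound => [n m chi nm|chi s_chi]; first exact: word_ball_mono nm chi.
  have := proj1 (List.Forall_forall _ _) sA chi s_chi.
  by rewrite A_eq => -[L _ BL]; exists L.
have [K BK] : exists K, forall chi, List.In chi (word_ball_seq op e rho g F c.+1) ->
    Qk K [set chi | List.In chi s] chi.
  apply: list_uniform_bound => [n m chi nm|chi Bchi].
    exact: Qk_mono nm (@subset_refl _ _) chi.
  have Achi : A chi by rewrite A_eq; exists c.+1 => //; rewrite /B word_ballE.
  exact: maximal_zindep_Qk (AD _ Achi) s_indep (s_max _ Achi).
exists (maxn 2 K); split; first by rewrite leq_max.
apply: (k_regular_from_tail (B := B) (c := c)) => //.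
- exact: word_ball_finite.
- exact: word_ball_mono.
- apply: word_ball_step => //; first by rewrite leq_maxl.
  move=> chi; rewrite /B word_ballE => /BK; apply: Qk_mono => //.
  exact: leq_maxr.
Qed.
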